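(* For any $0\leq p_0\leq p_1\leq 1$ and $\alpha\in[0,1]$, \[ h_2(\alpha p_0+(1-\alpha)p_1)-\alpha h_2(p_0)-(1-\alpha)h_2(p_1)\leq \min\left\{p_1-p_0,\ \frac{(p_1-p_0)^2}{2\min\{p_0,1-p_1\}}\right\}. \]
   Context: $h_2(p)=-p\log p-(1-p)\log(1-p)$ is the binary entropy function with natural logarithm. *)

From Stdlib Require Import Reals Lra.
Open Scope R_scope.

(* x ln x with the convention 0 ln 0 = 0 (natural logarithm). *)
Definition xlnx (x : R) : R := if Req_EM_T x 0 then 0 else x * ln x.

(* Binary entropy with natural logarithm. *)
Definition h2 (p : R) : R := - xlnx p - xlnx (1 - p).

(* Right-hand side min{p1-p0, (p1-p0)^2/(2 min{p0,1-p1})}, where the second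
   term is read as +infinity when min{p0,1-p1} = 0. *)
Definition lemma2_bound (p0 p1 : R) : R :=
  let m := Rmin p0 (1 - p1) in
  if Req_EM_T m 0 then p1 - p0
  else Rmin (p1 - p0) ((p1 - p0) ^ 2 / (2 * m)).

(* The Jensen gap of h2 at the mixture q = alpha p0 + (1 - alpha) p1 equals
   alpha D(p0 || q) + (1 - alpha) D(p1 || q), with D the binary relative
   entropy.  Bounding D by the chi-square divergence (via ln t <= t - 1)
   gives the gap at most alpha (1 - alpha) (p1 - p0)^2 / (q (1 - q)).
   Finally q (1 - q) >= alpha (1 - alpha) (p1 - p0) yields the bound p1 - p0,
   while q (1 - q) >= min{p0, 1 - p1} / 2 together with
   alpha (1 - alpha) <= 1/4 yields the bound (p1 - p0)^2 / (2 min{p0, 1 - p1}). *)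

From Stdlib Require Import Reals Lra Psatz Classical.
From Coquelicot Require Import Rcomplements.
Open Scope R_scope.

Lemma ln_le_sub1 (x : R) : 0 < x -> ln x <= x - 1.
Proof.
  intro Hx. pose proof (exp_ineq1_le (ln x)) as H. rewrite exp_ln in H; lra.
Qed.

Lemma xlnx_pos (x : R) : 0 < x -> xlnx x = x * ln x.
Proof. intro Hx. unfold xlnx. destruct (Req_EM_T x 0); lra. Qed.

Lemma xlnx_sub_mul_ln_le (a q : R) :
  0 <= a -> 0 < q -> xlnx a - a * ln q <= a * a / q - a.
Proof.
  intros Ha Hq. unfold xlnx. destruct (Req_EM_T a 0) as [->|Ha0].
  - unfold Rdiv. lra.
  - assert (Hln : a * ln a - a * ln q = a * ln (a / q)).
    { rewrite ln_div by lra. ring. }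
    assert (Hbound : ln (a / q) <= a / q - 1).
    { apply ln_le_sub1, Rdiv_lt_0_compat; lra. }
    rewrite Hln.
    replace (a * a / q - a) with (a * (a / q - 1)) by (field; lra).
    apply Rmult_le_compat_l; lra.
Qed.

Definition kl2 (p q : R) : R :=
  (xlnx p - p * ln q) + (xlnx (1 - p) - (1 - p) * ln (1 - q)).

Lemma kl2_le_chi2 (p q : R) :
  0 <= p <= 1 -> 0 < q < 1 -> kl2 p q <= (p - q) ^ 2 / (q * (1 - q)).
Proof.
  intros Hp Hq. unfold kl2.
  pose proof (xlnx_sub_mul_ln_le p q ltac:(lra) ltac:(lra)) as H0.
  pose proof (xlnx_sub_mul_ln_le (1 - p) (1 - q) ltac:(lra) ltac:(lra)) as H1.
  replace ((p - q) ^ 2 / (q * (1 - q)))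
    with ((p * p / q - p) + ((1 - p) * (1 - p) / (1 - q) - (1 - p)))
    by (field; lra).
  lra.
Qed.

Lemma mul_one_sub_ge_half (m x : R) :
  0 <= m -> m <= x -> m <= 1 - x -> m / 2 <= x * (1 - x).
Proof. intros Hm Hx Hx'. destruct (Rle_dec x (1 / 2)); nra. Qed.

Section Mixture.

Variables p0 p1 alpha : R.
Hypotheses (Hp0 : 0 <= p0) (Hp01 : p0 <= p1) (Hp1 : p1 <= 1).
Hypothesis Halpha : 0 <= alpha <= 1.

Local Notation q := (alpha * p0 + (1 - alpha) * p1).
Local Notation gap :=
  (h2 q - alpha * h2 p0 - (1 - alpha) * h2 p1).

Lemma h2_mixture_gap_eq_kl2 :
  0 < q < 1 -> gap = alpha * kl2 p0 q + (1 - alpha) * kl2 p1 q.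
Proof.
  intros Hq. unfold h2, kl2.
  rewrite (xlnx_pos q), (xlnx_pos (1 - q)) by lra.
  ring.
Qed.

Lemma h2_mixture_gap_le_chi2 :
  0 < q < 1 -> gap <= alpha * (1 - alpha) * (p1 - p0) ^ 2 / (q * (1 - q)).
Proof.
  intros Hq. rewrite h2_mixture_gap_eq_kl2 by exact Hq.
  pose proof (kl2_le_chi2 p0 q ltac:(lra) Hq) as H0.
  pose proof (kl2_le_chi2 p1 q ltac:(lra) Hq) as H1.
  replace (alpha * (1 - alpha) * (p1 - p0) ^ 2 / (q * (1 - q)))
    with (alpha * ((p0 - q) ^ 2 / (q * (1 - q)))
          + (1 - alpha) * ((p1 - q) ^ 2 / (q * (1 - q))))
    by (field; nra).
  apply Rplus_le_compat; apply Rmult_le_compat_l; lra.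
Qed.

Lemma h2_mixture_gap_degenerate :
  alpha = 0 \/ alpha = 1 \/ p0 = p1 -> gap = 0.
Proof.
  intros [-> | [-> | ->]].
  - replace (0 * p0 + (1 - 0) * p1) with p1 by ring. ring.
  - replace (1 * p0 + (1 - 1) * p1) with p0 by ring. ring.
  - replace (alpha * p1 + (1 - alpha) * p1) with p1 by ring. ring.
Qed.

Lemma mixture_var_ge : alpha * (1 - alpha) * (p1 - p0) <= q * (1 - q).
Proof.
  assert (Hid : q * (1 - q) - alpha * (1 - alpha) * (p1 - p0)
    = p0 * (1 - p1) + alpha ^ 2 * p0 * (p1 - p0)
      + (1 - alpha) ^ 2 * (p1 - p0) * (1 - p1)) by ring.
  assert (0 <= p0 * (1 - p1)) by nra.
  assert (0 <= alpha ^ 2 * p0 * (p1 - p0)).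
  { apply Rmult_le_pos; [apply Rmult_le_pos; nra | lra]. }
  assert (0 <= (1 - alpha) ^ 2 * (p1 - p0) * (1 - p1)).
  { apply Rmult_le_pos; [apply Rmult_le_pos; nra | lra]. }
  lra.
Qed.

Lemma mixture_chi2_le_linear :
  0 < q < 1 -> alpha * (1 - alpha) * (p1 - p0) ^ 2 / (q * (1 - q)) <= p1 - p0.
Proof.
  intros Hq. apply Rle_div_l; [apply Rmult_lt_0_compat; lra|].
  pose proof mixture_var_ge. nra.
Qed.

Lemma mixture_chi2_le_quadratic (m := Rmin p0 (1 - p1)) :
  0 < m ->
  alpha * (1 - alpha) * (p1 - p0) ^ 2 / (q * (1 - q)) <= (p1 - p0) ^ 2 / (2 * m).
Proof.
  intros Hm.
  assert (Hmq : m <= q) by (apply Rle_trans with p0; [apply Rmin_l | nra]).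
  assert (Hmq' : m <= 1 - q) by (apply Rle_trans with (1 - p1); [apply Rmin_r | nra]).
  assert (Hquarter : alpha * (1 - alpha) <= 1 / 4)
    by (pose proof (pow2_ge_0 (2 * alpha - 1)); nra).
  assert (Hkey : alpha * (1 - alpha) * (2 * m) <= q * (1 - q)).
  { pose proof (mul_one_sub_ge_half m q ltac:(lra) Hmq Hmq').
    pose proof (Rmult_le_compat_r m _ _ ltac:(lra) Hquarter). lra. }
  apply Rle_div_l; [apply Rmult_lt_0_compat; lra|].
  assert (Hdiff : (p1 - p0) ^ 2 / (2 * m) * (q * (1 - q))
                  - alpha * (1 - alpha) * (p1 - p0) ^ 2
                  = (p1 - p0) ^ 2 / (2 * m)
                    * (q * (1 - q) - alpha * (1 - alpha) * (2 * m)))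
    by (field; lra).
  assert (Hcoef : 0 <= (p1 - p0) ^ 2 / (2 * m)).
  { apply Rmult_le_pos; [apply pow2_ge_0 | left; apply Rinv_0_lt_compat; lra]. }
  assert (Hslack : 0 <= q * (1 - q) - alpha * (1 - alpha) * (2 * m)) by lra.
  pose proof (Rmult_le_pos _ _ Hcoef Hslack). lra.
Qed.

Lemma mixture_chi2_le_lemma2_bound :
  0 < q < 1 ->
  alpha * (1 - alpha) * (p1 - p0) ^ 2 / (q * (1 - q)) <= lemma2_bound p0 p1.
Proof.
  intros Hq. unfold lemma2_bound.
  destruct (Req_EM_T _ 0) as [_|Hm0]; [exact (mixture_chi2_le_linear Hq)|].
  assert (Hm : 0 < Rmin p0 (1 - p1)).
  { assert (0 <= Rmin p0 (1 - p1)) by (apply Rmin_glb; lra). lra. }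
  apply Rmin_glb.
  - exact (mixture_chi2_le_linear Hq).
  - exact (mixture_chi2_le_quadratic Hm).
Qed.

End Mixture.

Lemma lemma2_bound_nonneg (p0 p1 : R) :
  0 <= p0 -> p0 <= p1 -> p1 <= 1 -> 0 <= lemma2_bound p0 p1.
Proof.
  intros Hp0 Hp01 Hp1. unfold lemma2_bound.
  destruct (Req_EM_T _ 0) as [_|Hm]; [lra|].
  assert (0 <= Rmin p0 (1 - p1)) by (apply Rmin_glb; lra).
  apply Rmin_glb; [lra|].
  apply Rmult_le_pos; [apply pow2_ge_0|].
  left; apply Rinv_0_lt_compat; lra.
Qed.

Theorem lemma2 (p0 p1 alpha : R) :
  0 <= p0 -> p0 <= p1 -> p1 <= 1 -> 0 <= alpha <= 1 ->
  h2 (alpha * p0 + (1 - alpha) * p1) - alpha * h2 p0 - (1 - alpha) * h2 p1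
  <= lemma2_bound p0 p1.
Proof.
  intros Hp0 Hp01 Hp1 Halpha.
  destruct (classic (alpha = 0 \/ alpha = 1 \/ p0 = p1)) as [Hdeg|Hnondeg].
  - rewrite h2_mixture_gap_degenerate by assumption.
    exact (lemma2_bound_nonneg p0 p1 Hp0 Hp01 Hp1).
  - assert (Hq : 0 < alpha * p0 + (1 - alpha) * p1 < 1)
      by (split; nra).
    eapply Rle_trans.
    + exact (h2_mixture_gap_le_chi2 p0 p1 alpha Hp0 Hp01 Hp1 Halpha Hq).
    + exact (mixture_chi2_le_lemma2_bound p0 p1 alpha Hp0 Hp01 Hp1 Halpha Hq).
Qed.
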